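(* Let $R$ be an $n\times n$ irreducible nonnegative matrix with positive left and right eigenvectors $u$ and $v$ for the PF eigenvalue $1$. Then for every positive integer $k$, \[ \phi(R^k)\le k\cdot\phi(R). \]
   Context: For a nonnegative matrix $M$ with $Mv=v$ and $M^Tu=u$ (this holds for $M=R^k$), define $\phi_S(M)=\langle\mathbf 1_S,D_uMD_v\mathbf 1_{\overline S}\rangle/\langle\mathbf 1_S,D_uMD_v\mathbf 1\rangle$ and $\phi(M)=\min\phi_S(M)$ over nonempty $S\subseteq[n]$ with $\sum_{i\in S}u_iv_i\le\frac12\sum_iu_iv_i$; here $D_x$ is the diagonal matrix with $x$ on its diagonal and $\mathbf 1_S$ the indicator vector of $S$. *)

From HB Require Import structures.
From mathcomp Require Import all_boot all_order all_algebra.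
Set Implicit Arguments. Unset Strict Implicit. Unset Printing Implicit Defensive.
Import Order.TTheory GRing.Theory Num.Theory.
Local Open Scope ring_scope.

Definition nonneg_mx (R : realFieldType) (n : nat) (A : 'M[R]_n) : Prop :=
  forall i j, 0 <= A i j.

Definition irreducible_mx (R : realFieldType) (n : nat) (A : 'M[R]_n) : Prop :=
  forall i j : 'I_n, exists k : nat, 0 < (A ^+ k) i j.

Definition pos_vec (R : realFieldType) (n : nat) (x : 'cV[R]_n) : Prop :=
  forall i, 0 < x i 0.

(* phi_S(M) = <1_S, D_u M D_v 1_{S^c}> / <1_S, D_u M D_v 1> *)
Definition phiS (R : realFieldType) (n : nat) (u v : 'cV[R]_n) (M : 'M[R]_n)
    (S : {set 'I_n}) : R :=
  (\sum_(i in S) \sum_(j in ~: S) u i 0 * M i j * v j 0) /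
  (\sum_(i in S) \sum_j u i 0 * M i j * v j 0).

Definition admissible (R : realFieldType) (n : nat) (u v : 'cV[R]_n)
    (S : {set 'I_n}) : bool :=
  (S != set0) && (\sum_(i in S) u i 0 * v i 0 <= (\sum_i u i 0 * v i 0) / 2%:R).

(* phi(M) = min of phi_S(M) over admissible S (the min is attained on a finite
   nonempty family; the value 0 is only a default for the degenerate case in
   which no admissible S exists, e.g. n = 1). *)
Definition phi (R : realFieldType) (n : nat) (u v : 'cV[R]_n) (M : 'M[R]_n) : R :=
  match [pick S | admissible u v S] with
  | Some S0 => \big[Order.min/phiS u v M S0]_(S | admissible u v S) phiS u v M S
  | None => 0
  end.

(* Write phi_S(M) as the weight of the cut (S, ~S) in the flow u_i M_ij v_j,
   divided by the mass sum_(i in S) u_i v_i, which does not depend on M as long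
   as M v = v.  A two-step path that starts in S and ends outside S leaves S at
   one of its two steps, so the cut weight is subadditive along products of
   nonnegative matrices with left eigenvector u and right eigenvector v; hence
   cut(R^k) <= k cut(R) for every S, and the inequality passes to the minimum. *)

From HB Require Import structures.
From mathcomp Require Import all_boot all_order all_algebra.
From mathcomp Require Import lra.
Import Order.TTheory GRing.Theory Num.Theory.
Local Open Scope ring_scope.

Lemma ler_sum_predT (R : numDomainType) (I : finType) (P : pred I) (F : I -> R) :
  (forall i, 0 <= F i) -> \sum_(i | P i) F i <= \sum_i F i.
Proof.
move=> F_ge0; rewrite [leRHS](bigID P) /= lerDl.
by apply: sumr_ge0 => i _; apply: F_ge0.
Qed.

Lemma nonneg_mxM (R : realFieldType) (n : nat) (A B : 'M[R]_n) :
  nonneg_mx A -> nonneg_mx B -> nonneg_mx (A *m B).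
Proof.
by move=> A_ge0 B_ge0 i j; rewrite mxE; apply: sumr_ge0 => l _; apply: mulr_ge0.
Qed.

Lemma nonneg_mxX (R : realFieldType) (n : nat) (A : 'M[R]_n) (k : nat) :
  nonneg_mx A -> nonneg_mx (A ^+ k).
Proof.
move=> A_ge0; elim: k => [|k IHk]; first by move=> i j; rewrite expr0 mxE ler0n.
by rewrite exprSr -mulmxE; apply: nonneg_mxM.
Qed.

Lemma mulmxX_fixed (R : pzRingType) (n m : nat) (A : 'M[R]_n) (x : 'M[R]_(n, m))
    (k : nat) :
  A *m x = x -> A ^+ k *m x = x.
Proof.
move=> Ax; elim: k => [|k IHk]; first by rewrite expr0 mul1mx.
by rewrite exprSr -mulmxE -mulmxA Ax.
Qed.

Lemma mulmxX_fixedl (R : pzRingType) (n m : nat) (A : 'M[R]_n) (x : 'M[R]_(m, n))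
    (k : nat) :
  x *m A = x -> x *m A ^+ k = x.
Proof.
move=> xA; elim: k => [|k IHk]; first by rewrite expr0 mulmx1.
by rewrite exprS -mulmxE mulmxA xA.
Qed.

Section CutWeight.

Variables (R : realFieldType) (n : nat) (u v : 'cV[R]_n).
Hypotheses (u_ge0 : forall i, 0 <= u i 0) (v_ge0 : forall i, 0 <= v i 0).

Definition cut_weight (M : 'M[R]_n) (S : {set 'I_n}) : R :=
  \sum_(i in S) \sum_(j in ~: S) u i 0 * M i j * v j 0.

Lemma phiS_fixed (M : 'M[R]_n) (S : {set 'I_n}) :
  M *m v = v -> phiS u v M S = cut_weight M S / \sum_(i in S) u i 0 * v i 0.
Proof.
move=> Mv; congr (_ / _); apply: eq_bigr => i _.
by rewrite -{2}Mv mxE big_distrr /=; apply: eq_bigr => j _; rewrite mulrA.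
Qed.

Lemma cut_weight1 (S : {set 'I_n}) : cut_weight 1%:M S = 0.
Proof.
apply: big1 => i iS; apply: big1 => j; rewrite in_setC => jNS.
have /negPf ij : i != j by apply: contraNneq jNS => <-.
by rewrite mxE ij mulr0 mul0r.
Qed.

(* Paths i -> l -> j with l \notin S (resp. l \in S) are bounded by the cut
   of P (resp. A) after summing out j with A v = v (resp. i with u^T P = u^T). *)
Lemma cut_weightM (P A : 'M[R]_n) (S : {set 'I_n}) :
  nonneg_mx P -> nonneg_mx A -> u^T *m P = u^T -> A *m v = v ->
  cut_weight (P *m A) S <= cut_weight P S + cut_weight A S.
Proof.
move=> P_ge0 A_ge0 uP Av.
pose t i l j := u i 0 * P i l * A l j * v j 0.
have t_ge0 i l j : 0 <= t i l j.
  by rewrite /t !mulr_ge0 ?u_ge0 ?v_ge0 ?P_ge0 ?A_ge0.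
have sum_t_i l j : \sum_i t i l j = u l 0 * A l j * v j 0.
  have := congr1 (fun x : 'rV[R]_n => x 0 l) uP; rewrite !mxE => <-.
  by rewrite !big_distrl; apply: eq_bigr => i _; rewrite !mxE.
have sum_t_j i l : \sum_j t i l j = u i 0 * P i l * v l 0.
  rewrite -[in RHS]Av mxE big_distrr /=.
  by apply: eq_bigr => j _; rewrite /t !mulrA.
have -> : cut_weight (P *m A) S =
    \sum_(i in S) \sum_(j in ~: S) (\sum_(l in ~: S) t i l j + \sum_(l in S) t i l j).
  apply: eq_bigr => i _; apply: eq_bigr => j _.
  rewrite mxE big_distrr big_distrl addrC (bigID (mem S)) /=.
  congr (_ + _); apply: eq_big => [l|l _]; rewrite ?in_setC ?mulrA //.
rewrite /cut_weight; under eq_bigr do rewrite big_split /=.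
rewrite big_split /=; apply: lerD.
- apply: ler_sum => i _; rewrite exchange_big /=.
  apply: ler_sum => l _; rewrite -sum_t_j.
  by apply: ler_sum_predT.
- rewrite exchange_big /=; under eq_bigr do rewrite exchange_big /=.
  rewrite exchange_big /=.
  apply: ler_sum => l _; apply: ler_sum => j _; rewrite -sum_t_i.
  by apply: ler_sum_predT.
Qed.

Lemma cut_weightX (A : 'M[R]_n) (S : {set 'I_n}) (k : nat) :
  nonneg_mx A -> u^T *m A = u^T -> A *m v = v ->
  cut_weight (A ^+ k) S <= k%:R * cut_weight A S.
Proof.
move=> A_ge0 uA Av; elim: k => [|k IHk]; first by rewrite expr0 cut_weight1 mul0r.
rewrite exprSr -mulmxE mulrSr mulrDl mul1r.
apply: le_trans (lerD IHk (lexx _)).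
by apply: cut_weightM; rewrite ?mulmxX_fixedl //; apply: nonneg_mxX.
Qed.

Lemma phiSX (A : 'M[R]_n) (S : {set 'I_n}) (k : nat) :
  nonneg_mx A -> u^T *m A = u^T -> A *m v = v ->
  phiS u v (A ^+ k) S <= k%:R * phiS u v A S.
Proof.
move=> A_ge0 uA Av.
rewrite !phiS_fixed ?mulmxX_fixed // mulrA ler_wpM2r ?cut_weightX //.
by rewrite invr_ge0 sumr_ge0 // => i _; rewrite mulr_ge0.
Qed.

Lemma phi_le_scale (M N : 'M[R]_n) (c : R) :
  (forall S, admissible u v S -> phiS u v M S <= c * phiS u v N S) ->
  phi u v M <= c * phi u v N.
Proof.
move=> le_phiS; rewrite /phi; case: pickP => [S0 S0_adm|_]; last by rewrite mulr0.
apply: (big_ind2 (fun a b => a <= c * b)) => //; first exact: le_phiS.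
move=> a1 b1 a2 b2 le_ab1 le_ab2.
rewrite /Order.min; case: ifP => a12; case: ifP => b12; lra.
Qed.

End CutWeight.

Theorem lemma3p13 (R : realFieldType) (n : nat) (A : 'M[R]_n) (u v : 'cV[R]_n) :
  (1 < n)%N ->
  nonneg_mx A -> irreducible_mx A ->
  pos_vec u -> pos_vec v ->
  A *m v = v -> A^T *m u = u ->
  forall k : nat, (0 < k)%N ->
  phi u v (A ^+ k) <= k%:R * phi u v A.
Proof.
move=> _ A_ge0 _ u_gt0 v_gt0 Av ATu k _.
have uA : u^T *m A = u^T by rewrite -[in RHS]ATu trmx_mul trmxK.
have u_ge0 i : 0 <= u i 0 by apply: ltW.
have v_ge0 i : 0 <= v i 0 by apply: ltW.
by apply: phi_le_scale => S _; apply: phiSX.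
Qed.
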